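(* $C(\partial\mathcal{T})_0 = \left\{ f \in C(\partial\mathcal{T}): \sup_{(v,v')\in \mathcal H} \frac{|f(\tau(v)) - f(\tau(v'))|}{\delta(v,v')} < \infty \right\}$ is a dense subalgebra of $C(\partial\mathcal{T})$.
   Context: Let $\mathcal{T}=(\mathcal{T}^{(0)},\mathcal{T}^{(1)})$ be a rooted tree (edges oriented away from the root) in which every vertex has finitely many outgoing edges, so each level $\mathcal{T}^{(0)}_n$ (vertices at combinatorial distance $n$ from the root) is finite. Write $v\preceq v'$ if there is a (possibly empty) path from $v$ to $v'$, and for vertices $v,v'$ let $v\wedge v'$ denote their greatest common ancestor and $|v\wedge v'|$ its level. The boundary $\partial\mathcal{T}$ is the set of infinite paths starting at the root, with the topology whose basis consists of the clopen sets $[v]$ = infinite paths passing through $v$; it is a compact totally disconnected metrizable space. Let $\mathcal H\subset\{(v,v')\in\mathcal{T}^{(0)}\times\mathcal{T}^{(0)}: v\not\preceq v', v'\not\preceq v\}$ be a non-empty symmetric set of ''horizontal edges'', locally finite. Let $\delta:\mathcal H\to\mathbb{R}^{>0}$ be a symmetric length function such that for every $\epsilon>0$ only finitely many $h\in\mathcal H$ have $\delta(h)>\epsilon$, and such that there is a strictly decreasing sequence $(\delta_n)_n$ tending to $0$ with $\delta(v,v')\ge\delta_{|v\wedge v'|}$. Let $\tau:\mathcal{T}^{(0)}\to\partial\mathcal{T}$ be a choice function: $\tau(v)$ passes through $v$, and if $w\prec v$ then $\tau(w)=\tau(v)$ iff $\tau(w)$ passes through $v$. *)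

From Stdlib Require Import Reals List Lia.
From Coquelicot Require Import Coquelicot.
Open Scope R_scope.

(* A locally finite rooted tree is encoded (up to isomorphism) by a
   branching function b : list nat -> nat : the vertices are the words
   w = [i_0; ...; i_{n-1}] with i_k < b (first k letters of w); the root is
   the empty word, the children of w are the words w ++ [i] with i < b w,
   and the level of w is its length. *)
Definition valid (b : list nat -> nat) (w : list nat) : Prop :=
  forall k, (k < length w)%nat -> (nth k w 0 < b (firstn k w))%nat.

Definition vertex (b : list nat -> nat) := {w : list nat | valid b w}.

Definition word {b} (v : vertex b) : list nat := proj1_sig v.

Definition prefix (x : nat -> nat) (n : nat) : list nat := map x (seq 0 n).

Definition boundary (b : list nat -> nat) :=
  {x : nat -> nat | forall n, (x n < b (prefix x n))%nat}.

Definition path {b} (x : boundary b) : nat -> nat := proj1_sig x.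

Definition passes {b} (x : boundary b) (v : vertex b) : Prop :=
  prefix (path x) (length (word v)) = word v.

Definition preceq {b} (v v' : vertex b) : Prop :=
  exists u, word v ++ u = word v'.

Definition prec {b} (v v' : vertex b) : Prop := preceq v v' /\ v <> v'.

Fixpoint lcp_len (u w : list nat) : nat :=
  match u, w with
  | a :: u', c :: w' => if Nat.eqb a c then S (lcp_len u' w') else 0%nat
  | _, _ => 0%nat
  end.

Definition meet_level {b} (v v' : vertex b) : nat := lcp_len (word v) (word v').

(* Continuity on the boundary for the topology with basis the cylinders [v]:
   the neighbourhoods of x are the cylinders [prefix x n]. *)
Definition continuous_bd {b} (f : boundary b -> C) : Prop :=
  forall (x : boundary b) (eps : R), 0 < eps ->
    exists n : nat, forall y : boundary b,
      (forall k, (k < n)%nat -> path y k = path x k) ->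
      Cmod (Cminus (f y) (f x)) < eps.

Definition C0 {b} (H : vertex b -> vertex b -> Prop)
  (delta : vertex b -> vertex b -> R) (tau : vertex b -> boundary b)
  (f : boundary b -> C) : Prop :=
  continuous_bd f /\
  exists M : R, forall v v', H v v' ->
    Cmod (Cminus (f (tau v)) (f (tau v'))) / delta v v' <= M.

Definition subalgebra {b} (A : (boundary b -> C) -> Prop) : Prop :=
  (forall f, A f -> continuous_bd f) /\
  A (fun _ => RtoC 1) /\
  (forall f g, A f -> A g -> A (fun x => Cplus (f x) (g x))) /\
  (forall f g, A f -> A g -> A (fun x => Cmult (f x) (g x))) /\
  (forall (c : C) f, A f -> A (fun x => Cmult c (f x))).

Definition dense_sup {b} (A : (boundary b -> C) -> Prop) : Prop :=
  forall f : boundary b -> C, continuous_bd f ->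
    forall eps : R, 0 < eps ->
      exists g, A g /\ forall x, Cmod (Cminus (f x) (g x)) <= eps.

From Stdlib Require Import Reals List.
From Coquelicot Require Import Coquelicot.
From Stdlib Require Import Classical ClassicalEpsilon ProofIrrelevance Lra Lia Psatz.
Open Scope R_scope.

(* A continuous function on the boundary is bounded and uniformly continuous: the tree
   is finitely branching, so a property that every path eventually satisfies and that
   passes from all children to their parent holds at the root (König's lemma).
   Sums, scalar multiples and products of bounded functions with bounded quotients
   |f(tau v) - f(tau v')| / delta(v,v') again have bounded quotients, which gives the
   subalgebra.  For density, approximate f by x |-> f(tau(v_N x)), with v_N x the
   vertex of level N on x: it is within eps of f once N is a modulus of uniform
   continuity, and its quotients vanish unless |v /\ v'| < N, in which case
   delta(v,v') >= delta_N > 0. *)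

Lemma prefix_length (x : nat -> nat) n : length (prefix x n) = n.
Proof. unfold prefix. rewrite length_map, length_seq. reflexivity. Qed.

Lemma prefix_S (x : nat -> nat) n : prefix x (S n) = prefix x n ++ x n :: nil.
Proof. unfold prefix. rewrite seq_S, map_app. reflexivity. Qed.

Lemma nth_prefix (x : nat -> nat) n k : (k < n)%nat -> nth k (prefix x n) 0%nat = x k.
Proof.
  intros Hk. unfold prefix.
  rewrite nth_indep with (d' := x 0%nat) by (rewrite length_map, length_seq; lia).
  rewrite map_nth, seq_nth by lia. reflexivity.
Qed.

Lemma firstn_prefix (x : nat -> nat) m n : (m <= n)%nat -> firstn m (prefix x n) = prefix x m.
Proof.
  intros Hm. replace n with (m + (n - m))%nat by lia.
  unfold prefix. rewrite seq_app, map_app, firstn_app.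
  rewrite firstn_all2 by (rewrite length_map, length_seq; lia).
  rewrite length_map, length_seq, Nat.sub_diag, app_nil_r. reflexivity.
Qed.

Lemma prefix_eq_iff (x y : nat -> nat) n :
  prefix y n = prefix x n <-> (forall k, (k < n)%nat -> y k = x k).
Proof.
  split.
  - intros Hxy k Hk. now rewrite <- (nth_prefix y n k Hk), <- (nth_prefix x n k Hk), Hxy.
  - intros Hxy. apply map_ext_in. intros a Ha. apply in_seq in Ha. apply Hxy. lia.
Qed.

Lemma prefix_eq_le (x y : nat -> nat) m n : (m <= n)%nat ->
  prefix y n = prefix x n -> prefix y m = prefix x m.
Proof.
  intros Hm Hxy. now rewrite <- (firstn_prefix y m n Hm), <- (firstn_prefix x m n Hm), Hxy.
Qed.

Lemma lcp_len_firstn (u w : list nat) n : (n <= lcp_len u w)%nat ->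
  firstn n u = firstn n w /\ (n <= length u)%nat /\ (n <= length w)%nat.
Proof.
  revert w n. induction u as [|a u IH]; intros [|c w] n Hn; simpl in Hn;
    try (replace n with 0%nat by lia; simpl; split; auto; lia).
  destruct (Nat.eqb_spec a c) as [<-|]; [|replace n with 0%nat by lia; simpl; split; auto; lia].
  destruct n as [|n]; [simpl; split; auto; lia|].
  destruct (IH w n) as [Hf [Hu Hw]]; [lia|]. simpl. rewrite Hf. split; auto; lia.
Qed.

Definition through {b} (y : boundary b) (w : list nat) : Prop :=
  prefix (path y) (length w) = w.

Lemma through_nil b (y : boundary b) : through y nil.
Proof. reflexivity. Qed.

Lemma through_prefix b (x y : boundary b) n :
  through y (prefix (path x) n) <-> prefix (path y) n = prefix (path x) n.
Proof. unfold through. now rewrite prefix_length. Qed.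

Lemma through_prefix_agree b (x y : boundary b) n :
  through y (prefix (path x) n) -> forall k, (k < n)%nat -> path y k = path x k.
Proof. now intros Hy%through_prefix; apply prefix_eq_iff. Qed.

Lemma through_child b (y : boundary b) (w : list nat) : through y w ->
  (path y (length w) < b w)%nat /\ through y (w ++ path y (length w) :: nil).
Proof.
  unfold through. intros Hw. split.
  - rewrite <- Hw at 2. apply (proj2_sig y).
  - rewrite length_app, Nat.add_1_r, prefix_S, Hw. reflexivity.
Qed.

Lemma valid_prefix b (x : boundary b) n : valid b (prefix (path x) n).
Proof.
  intros k Hk. rewrite prefix_length in Hk.
  rewrite nth_prefix, firstn_prefix by lia. apply (proj2_sig x).
Qed.

Definition level_vertex {b} (x : boundary b) (n : nat) : vertex b :=
  exist _ (prefix (path x) n) (valid_prefix b x n).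

Lemma level_vertex_eq b (x y : boundary b) n :
  prefix (path y) n = prefix (path x) n -> level_vertex y n = level_vertex x n.
Proof.
  unfold level_vertex. generalize (valid_prefix b y n) (valid_prefix b x n).
  intros Hy Hx Hxy. revert Hy. rewrite Hxy. intros Hy. f_equal. apply proof_irrelevance.
Qed.

Lemma passes_level_vertex b (x z : boundary b) n :
  passes z (level_vertex x n) -> prefix (path z) n = prefix (path x) n.
Proof. unfold passes. simpl. now rewrite prefix_length. Qed.

Lemma passes_meet_level b (x x' : boundary b) (v v' : vertex b) n :
  (n <= meet_level v v')%nat -> passes x v -> passes x' v' ->
  prefix (path x) n = prefix (path x') n.
Proof.
  unfold passes, meet_level. intros Hn Hx Hx'.
  destruct (lcp_len_firstn _ _ _ Hn) as [Hvv' [Hv Hv']].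
  now rewrite <- (firstn_prefix _ n _ Hv), <- (firstn_prefix _ n _ Hv'), Hx, Hx'.
Qed.
Lemma fan_induction b (P : list nat -> Prop) :
  (forall x : boundary b, exists n, P (prefix (path x) n)) ->
  (forall w, (forall i, (i < b w)%nat -> P (w ++ i :: nil)) -> P w) -> P nil.
Proof.
  intros Hbar Hstep. apply NNPP. intros Hnil.
  assert (bad_child : forall w, ~ P w -> {i : nat | (i < b w)%nat /\ ~ P (w ++ i :: nil)}).
  { intros w Hw. apply constructive_indefinite_description.
    apply NNPP. intros Hall. apply Hw, Hstep. intros i Hi. apply NNPP. intros Hi'.
    apply Hall. now exists i. }
  (* König's lemma: follow bad children forever, building a path that never meets P. *)
  set (bad := fix bad (n : nat) : {w : list nat | ~ P w} :=
    match n with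
    | O => exist _ nil Hnil
    | S n => let p := bad n in
        exist (fun w => ~ P w) (proj1_sig p ++ proj1_sig (bad_child _ (proj2_sig p)) :: nil)
              (proj2 (proj2_sig (bad_child _ (proj2_sig p))))
    end).
  set (x := fun n => proj1_sig (bad_child _ (proj2_sig (bad n)))).
  assert (Hx : forall n, prefix x n = proj1_sig (bad n)).
  { induction n as [|n IH]; [reflexivity|]. now rewrite prefix_S, IH. }
  assert (Hxb : forall n, (x n < b (prefix x n))%nat).
  { intros n. rewrite Hx. exact (proj1 (proj2_sig (bad_child _ (proj2_sig (bad n))))). }
  destruct (Hbar (exist _ x Hxb)) as [n Hn]. simpl in Hn.
  rewrite Hx in Hn. exact (proj2_sig (bad n) Hn).
Qed.

Lemma finite_upper_bound {T} (le : T -> T -> Prop) (mx : T -> T -> T) (t0 : T)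
  (le_mx_l : forall s t, le s (mx s t)) (le_mx_r : forall s t, le t (mx s t))
  (Q : nat -> T -> Prop) (Q_mono : forall i s t, Q i s -> le s t -> Q i t) k :
  (forall i, (i < k)%nat -> exists t, Q i t) -> exists t, forall i, (i < k)%nat -> Q i t.
Proof.
  induction k as [|k IH]; intros Hk.
  - exists t0. intros; lia.
  - destruct IH as [s Hs]; [intros; apply Hk; lia|].
    destruct (Hk k) as [t Ht]; [lia|].
    exists (mx s t). intros i Hi. destruct (Nat.eq_dec i k) as [->|].
    + exact (Q_mono _ _ _ Ht (le_mx_r s t)).
    + apply (Q_mono _ s); [apply Hs; lia | apply le_mx_l].
Qed.

Lemma fan_bound b {T} (le : T -> T -> Prop) (mx : T -> T -> T) (t0 : T)
  (le_mx_l : forall s t, le s (mx s t)) (le_mx_r : forall s t, le t (mx s t))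
  (Q : list nat -> T -> Prop) (Q_mono : forall w s t, Q w s -> le s t -> Q w t) :
  (forall x : boundary b, exists n t, Q (prefix (path x) n) t) ->
  (forall w t, (forall i, (i < b w)%nat -> Q (w ++ i :: nil) t) -> exists t', Q w t') ->
  exists t, Q nil t.
Proof.
  intros Hbar Hstep. apply (fan_induction b (fun w => exists t, Q w t)); [exact Hbar|].
  intros w Hw.
  destruct (finite_upper_bound le mx t0 le_mx_l le_mx_r (fun i => Q (w ++ i :: nil))
              (fun i => Q_mono (w ++ i :: nil)) (b w) Hw) as [t Ht].
  exact (Hstep w t Ht).
Qed.

Lemma continuous_bd_bounded b (f : boundary b -> C) : continuous_bd f ->
  exists B, 0 <= B /\ forall x, Cmod (f x) <= B.
Proof.
  intros Hf.
  destruct (fan_bound b Rle Rmax 0 Rmax_l Rmax_r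
              (fun w B => forall y, through y w -> Cmod (f y) <= B)) as [B HB].
  - intros w B B' HB HBB' y Hy. specialize (HB y Hy). lra.
  - intros x. destruct (Hf x 1 Rlt_0_1) as [n Hn]. exists n, (Cmod (f x) + 1).
    intros y Hy. specialize (Hn y (through_prefix_agree _ _ _ _ Hy)).
    replace (f y) with (Cplus (Cminus (f y) (f x)) (f x)) by ring.
    pose proof (Cmod_triangle (Cminus (f y) (f x)) (f x)). lra.
  - intros w B HB. exists B. intros y Hy.
    destruct (through_child b y w Hy) as [Hi Hc]. exact (HB _ Hi y Hc).
  - exists (Rmax B 0). split; [apply Rmax_r|].
    intros x. eapply Rle_trans; [apply HB, through_nil | apply Rmax_l].
Qed.

Lemma Cmod_sub_le (a c d : C) : Cmod (Cminus a c) <= Cmod (Cminus a d) + Cmod (Cminus c d).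
Proof.
  replace (Cminus a c) with (Cplus (Cminus a d) (Copp (Cminus c d))) by ring.
  rewrite <- (Cmod_opp (Cminus c d)). apply Cmod_triangle.
Qed.

Lemma continuous_bd_uniform b (f : boundary b -> C) : continuous_bd f ->
  forall eps, 0 < eps -> exists N, forall y z : boundary b,
    prefix (path y) N = prefix (path z) N -> Cmod (Cminus (f y) (f z)) < eps.
Proof.
  intros Hf eps He.
  destruct (fan_bound b le Nat.max 0%nat Nat.le_max_l Nat.le_max_r
              (fun w N => forall y z, through y w -> through z w ->
                 prefix (path y) N = prefix (path z) N -> Cmod (Cminus (f y) (f z)) < eps))
    as [N HN].
  - intros w N N' HN HNN' y z Hy Hz Hyz. apply HN; auto. exact (prefix_eq_le _ _ _ _ HNN' Hyz).
  - intros x. destruct (Hf x (eps / 2)) as [n Hn]; [lra|]. exists n, n.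
    intros y z Hy Hz _.
    pose proof (Hn y (through_prefix_agree _ _ _ _ Hy)).
    pose proof (Hn z (through_prefix_agree _ _ _ _ Hz)). pose proof (Cmod_sub_le (f y) (f z) (f x)). lra.
  - intros w N HN. exists (Nat.max N (S (length w))). intros y z Hy Hz Hyz.
    destruct (through_child b y w Hy) as [Hi Hyc].
    destruct (through_child b z w Hz) as [_ Hzc].
    (* agreeing beyond level |w|, y and z pass through the same child of w *)
    assert (Hyz_w : path y (length w) = path z (length w)).
    { apply (proj1 (prefix_eq_iff (path z) (path y) (S (length w)))); [|lia].
      apply (prefix_eq_le _ _ _ _ (Nat.le_max_r N _) Hyz). }
    rewrite <- Hyz_w in Hzc.
    exact (HN _ Hi y z Hyc Hzc (prefix_eq_le _ _ _ _ (Nat.le_max_l _ _) Hyz)).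
  - exists N. intros y z. apply HN; apply through_nil.
Qed.

Lemma Cmod_plus_sub_le (a c a' c' : C) :
  Cmod (Cminus (Cplus a c) (Cplus a' c')) <= Cmod (Cminus a a') + Cmod (Cminus c c').
Proof.
  replace (Cminus (Cplus a c) (Cplus a' c')) with (Cplus (Cminus a a') (Cminus c c')) by ring.
  apply Cmod_triangle.
Qed.

Lemma Cmod_scal_sub (k a a' : C) :
  Cmod (Cminus (Cmult k a) (Cmult k a')) = Cmod k * Cmod (Cminus a a').
Proof.
  replace (Cminus (Cmult k a) (Cmult k a')) with (Cmult k (Cminus a a')) by ring.
  apply Cmod_mult.
Qed.

Lemma Cmod_mult_sub_le (a c a' c' : C) (A B ea ec : R) :
  Cmod a <= A -> Cmod c' <= B -> Cmod (Cminus a a') <= ea -> Cmod (Cminus c c') <= ec ->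
  Cmod (Cminus (Cmult a c) (Cmult a' c')) <= A * ec + B * ea.
Proof.
  intros Ha Hc' Haa' Hcc'.
  replace (Cminus (Cmult a c) (Cmult a' c'))
    with (Cplus (Cmult a (Cminus c c')) (Cmult c' (Cminus a a'))) by ring.
  eapply Rle_trans; [apply Cmod_triangle|]. rewrite !Cmod_mult.
  apply Rplus_le_compat; apply Rmult_le_compat; auto using Cmod_ge_0.
Qed.

Lemma Cmod_sub_diag (a : C) : Cmod (Cminus a a) = 0.
Proof. replace (Cminus a a) with (RtoC 0) by ring. apply Cmod_0. Qed.

Section Lipschitz.

Variables (A : Type) (E : A -> A -> Prop) (d : A -> A -> R).
Hypothesis d_pos : forall a a', E a a' -> 0 < d a a'.

Definition lipschitz (F : A -> C) : Prop :=
  exists M, forall a a', E a a' -> Cmod (Cminus (F a) (F a')) / d a a' <= M.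

Lemma lipschitz_iff_le_mul (F : A -> C) :
  lipschitz F <-> exists M, forall a a', E a a' -> Cmod (Cminus (F a) (F a')) <= M * d a a'.
Proof.
  split; intros [M HM]; exists M; intros a a' Ha; apply Rle_div_l;
    solve [exact (d_pos a a' Ha) | exact (HM a a' Ha)].
Qed.

Lemma lipschitz_const (c : C) : lipschitz (fun _ => c).
Proof.
  apply lipschitz_iff_le_mul. exists 0. intros a a' Ha.
  rewrite Cmod_sub_diag, Rmult_0_l. lra.
Qed.

Lemma lipschitz_plus (F G : A -> C) :
  lipschitz F -> lipschitz G -> lipschitz (fun a => Cplus (F a) (G a)).
Proof.
  rewrite !lipschitz_iff_le_mul. intros [MF HF] [MG HG]. exists (MF + MG). intros a a' Ha.
  pose proof (HF a a' Ha). pose proof (HG a a' Ha).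
  pose proof (Cmod_plus_sub_le (F a) (G a) (F a') (G a')). lra.
Qed.

Lemma lipschitz_mult (F G : A -> C) (BF BG : R) :
  (forall a, Cmod (F a) <= BF) -> (forall a, Cmod (G a) <= BG) ->
  lipschitz F -> lipschitz G -> lipschitz (fun a => Cmult (F a) (G a)).
Proof.
  rewrite !lipschitz_iff_le_mul. intros HBF HBG [MF HF] [MG HG].
  exists (BF * MG + BG * MF). intros a a' Ha.
  eapply Rle_trans; [apply (Cmod_mult_sub_le _ _ _ _ _ _ _ _ (HBF a) (HBG a') (HF a a' Ha) (HG a a' Ha))|].
  lra.
Qed.

Lemma lipschitz_scal (k : C) (F : A -> C) : lipschitz F -> lipschitz (fun a => Cmult k (F a)).
Proof.
  rewrite !lipschitz_iff_le_mul. intros [M HM]. exists (Cmod k * M). intros a a' Ha.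
  rewrite Cmod_scal_sub, Rmult_assoc. apply Rmult_le_compat_l; auto using Cmod_ge_0.
Qed.

End Lipschitz.

Arguments lipschitz {A} E d F.

Lemma continuous_bd_const b (c : C) : continuous_bd (fun _ : boundary b => c).
Proof. intros x eps He. exists 0%nat. intros y _. now rewrite Cmod_sub_diag. Qed.

Lemma continuous_bd_plus b (f g : boundary b -> C) :
  continuous_bd f -> continuous_bd g -> continuous_bd (fun x => Cplus (f x) (g x)).
Proof.
  intros Hf Hg x eps He.
  destruct (Hf x (eps / 2)) as [nf Hnf]; [lra|].
  destruct (Hg x (eps / 2)) as [ng Hng]; [lra|].
  exists (Nat.max nf ng). intros y Hy.
  pose proof (Hnf y (fun k Hk => Hy k ltac:(lia))).
  pose proof (Hng y (fun k Hk => Hy k ltac:(lia))).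
  pose proof (Cmod_plus_sub_le (f y) (g y) (f x) (g x)). lra.
Qed.

Lemma continuous_bd_mult b (f g : boundary b -> C) :
  continuous_bd f -> continuous_bd g -> continuous_bd (fun x => Cmult (f x) (g x)).
Proof.
  intros Hf Hg x eps He.
  destruct (continuous_bd_bounded b f Hf) as [Bf [Bf0 HBf]].
  destruct (continuous_bd_bounded b g Hg) as [Bg [Bg0 HBg]].
  set (e := eps / (Bf + Bg + 1)).
  assert (He' : 0 < e) by (apply Rdiv_lt_0_compat; lra).
  assert (Hee : e * (Bf + Bg + 1) = eps) by (unfold e; field; lra).
  destruct (Hf x e He') as [nf Hnf]. destruct (Hg x e He') as [ng Hng].
  exists (Nat.max nf ng). intros y Hy.
  pose proof (Hnf y (fun k Hk => Hy k ltac:(lia))).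
  pose proof (Hng y (fun k Hk => Hy k ltac:(lia))).
  eapply Rle_lt_trans.
  { apply (Cmod_mult_sub_le _ _ _ _ Bf Bg e e (HBf y) (HBg x)); lra. }
  nra.
Qed.

Lemma continuous_bd_scal b (k : C) (f : boundary b -> C) :
  continuous_bd f -> continuous_bd (fun x => Cmult k (f x)).
Proof.
  intros Hf x eps He. pose proof (Cmod_ge_0 k) as Hk.
  set (e := eps / (Cmod k + 1)).
  assert (He' : 0 < e) by (apply Rdiv_lt_0_compat; lra).
  assert (Hee : e * (Cmod k + 1) = eps) by (unfold e; field; lra).
  destruct (Hf x e He') as [n Hn]. exists n. intros y Hy.
  specialize (Hn y Hy). rewrite Cmod_scal_sub.
  pose proof (Rmult_le_compat_l _ _ _ Hk (Rlt_le _ _ Hn)). nra.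
Qed.

Lemma continuous_bd_level_const b (g : boundary b -> C) N :
  (forall x y, prefix (path y) N = prefix (path x) N -> g y = g x) -> continuous_bd g.
Proof.
  intros Hg x eps He. exists N. intros y Hy.
  rewrite (Hg x y (proj2 (prefix_eq_iff _ _ _) Hy)), Cmod_sub_diag. exact He.
Qed.

Lemma strict_decr_le (dn : nat -> R) : (forall n, dn (S n) < dn n) ->
  forall m n, (m <= n)%nat -> dn n <= dn m.
Proof.
  intros Hdn m n Hmn. induction Hmn as [|n _ IH]; [lra|]. specialize (Hdn n). lra.
Qed.

Lemma strict_decr_lim0_pos (dn : nat -> R) : (forall n, dn (S n) < dn n) ->
  is_lim_seq dn 0 -> forall n, 0 < dn n.
Proof.
  intros Hdn Hlim n. pose proof (is_lim_seq_decr_compare dn 0 Hlim) as Hge.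
  specialize (Hge (fun k => Rlt_le _ _ (Hdn k)) (S n)). specialize (Hdn n). lra.
Qed.

Section C0_algebra.

Variables (b : list nat -> nat) (H : vertex b -> vertex b -> Prop)
  (delta : vertex b -> vertex b -> R) (tau : vertex b -> boundary b).
Hypothesis delta_pos : forall v v', H v v' -> 0 < delta v v'.

Lemma C0_subalgebra : subalgebra (C0 H delta tau).
Proof.
  split; [|split; [|split; [|split]]].
  - now intros f [Hf _].
  - split; [apply continuous_bd_const | apply lipschitz_const; exact delta_pos].
  - intros f g [Hf Lf] [Hg Lg].
    split; [apply continuous_bd_plus | apply lipschitz_plus]; auto.
  - intros f g [Hf Lf] [Hg Lg].
    destruct (continuous_bd_bounded b f Hf) as [Bf [_ HBf]].
    destruct (continuous_bd_bounded b g Hg) as [Bg [_ HBg]].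
    split; [apply continuous_bd_mult | apply (lipschitz_mult _ _ _ delta_pos _ _ Bf Bg)]; auto.
  - intros k f [Hf Lf].
    split; [apply continuous_bd_scal | apply lipschitz_scal]; auto.
Qed.

Variable dn : nat -> R.
Hypothesis dn_decr : forall n, dn (S n) < dn n.
Hypothesis dn_lim : is_lim_seq dn 0.
Hypothesis delta_ge_dn : forall v v', H v v' -> dn (meet_level v v') <= delta v v'.
Hypothesis tau_passes : forall v, passes (tau v) v.

Lemma lipschitz_level_const (g : boundary b -> C) B N :
  (forall x, Cmod (g x) <= B) ->
  (forall x y, prefix (path y) N = prefix (path x) N -> g y = g x) ->
  lipschitz H delta (fun v => g (tau v)).
Proof.
  intros HB Hg. apply lipschitz_iff_le_mul; [exact delta_pos|].
  pose proof (strict_decr_lim0_pos dn dn_decr dn_lim N) as HdN.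
  exists (2 * B / dn N). intros v v' Hv. pose proof (delta_pos v v' Hv) as Hd.
  assert (HB0 : 0 <= B) by (eapply Rle_trans; [apply Cmod_ge_0 | apply (HB (tau v))]).
  destruct (Nat.le_gt_cases N (meet_level v v')) as [Hle|Hlt].
  - rewrite (Hg (tau v') (tau v)), Cmod_sub_diag.
    + apply Rmult_le_pos; [apply Rdiv_le_0_compat|]; lra.
    + exact (passes_meet_level b _ _ v v' N Hle (tau_passes v) (tau_passes v')).
  - assert (Hdiff : Cmod (Cminus (g (tau v)) (g (tau v'))) <= 2 * B).
    { pose proof (Cmod_sub_le (g (tau v)) (g (tau v')) (RtoC 0)).
      replace (Cminus (g (tau v)) (RtoC 0)) with (g (tau v)) in * by ring.
      replace (Cminus (g (tau v')) (RtoC 0)) with (g (tau v')) in * by ring.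
      pose proof (HB (tau v)). pose proof (HB (tau v')). lra. }
    assert (HdNv : dn N <= delta v v').
    { eapply Rle_trans; [apply (strict_decr_le dn dn_decr (meet_level v v') N); lia|].
      exact (delta_ge_dn v v' Hv). }
    eapply Rle_trans; [exact Hdiff|].
    replace (2 * B) with (2 * B / dn N * dn N) at 1 by (field; lra).
    apply Rmult_le_compat_l; [apply Rdiv_le_0_compat; lra | exact HdNv].
Qed.

Lemma C0_dense : dense_sup (C0 H delta tau).
Proof.
  intros f Hf eps He.
  destruct (continuous_bd_bounded b f Hf) as [B [_ HB]].
  destruct (continuous_bd_uniform b f Hf eps He) as [N HN].
  set (g := fun x => f (tau (level_vertex x N))).
  assert (Hg : forall x y, prefix (path y) N = prefix (path x) N -> g y = g x).
  { intros x y Hxy. unfold g. now rewrite (level_vertex_eq b x y N Hxy). }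
  exists g. split; [split|].
  - exact (continuous_bd_level_const b g N Hg).
  - exact (lipschitz_level_const g B N (fun x => HB _) Hg).
  - intros x. left. apply HN.
    symmetry. exact (passes_level_vertex b x _ N (tau_passes _)).
Qed.

End C0_algebra.

Theorem lemma2p2 (b : list nat -> nat)
  (H : vertex b -> vertex b -> Prop)
  (delta : vertex b -> vertex b -> R)
  (tau : vertex b -> boundary b)
  (H_sym : forall v v', H v v' -> H v' v)
  (H_horiz : forall v v', H v v' -> ~ preceq v v' /\ ~ preceq v' v)
  (H_nonempty : exists v v', H v v')
  (H_locfin : forall v, exists l : list (vertex b), forall v', H v v' -> In v' l)
  (delta_pos : forall v v', H v v' -> 0 < delta v v')
  (delta_sym : forall v v', H v v' -> delta v v' = delta v' v)
  (delta_fin : forall eps, 0 < eps ->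
     exists l : list (vertex b * vertex b),
       forall v v', H v v' -> eps < delta v v' -> In (v, v') l)
  (delta_seq : exists dn : nat -> R,
     (forall n, dn (S n) < dn n) /\ is_lim_seq dn 0 /\
     forall v v', H v v' -> dn (meet_level v v') <= delta v v')
  (tau_passes : forall v, passes (tau v) v)
  (tau_choice : forall w v, prec w v -> (tau w = tau v <-> passes (tau w) v)) :
  subalgebra (C0 H delta tau) /\ dense_sup (C0 H delta tau).
Proof.
  destruct delta_seq as [dn [dn_decr [dn_lim delta_ge_dn]]].
  split.
  - exact (C0_subalgebra b H delta tau delta_pos).
  - exact (C0_dense b H delta tau delta_pos dn dn_decr dn_lim delta_ge_dn tau_passes).
Qed.
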